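(* Let $E$, $D$, $S$ be binary random variables taking values in $\{0,1\}$ such that every joint cell probability $P(E=e,D=d,S=s)$ is positive, and write $p(d,e)=P(S=1\mid D=d,E=e)$ and $o(d,e)=p(d,e)/(1-p(d,e))$. Define the interaction measures $$I_{OR}=\frac{o(1,1)\,o(0,0)}{o(1,0)\,o(0,1)},\quad I_{RR}=\frac{p(1,1)\,p(0,0)}{p(1,0)\,p(0,1)},\quad I_{RD}=p(1,1)+p(0,0)-p(1,0)-p(0,1).$$ (a) Suppose that at least one of $I_{OR}\le 1$, $I_{RR}\le 1$, $I_{RD}\le 0$ holds (non-positive interaction of $E$ and $D$ on $S$ on the odds ratio, risk ratio, or risk difference scale, respectively), and that $p(d,e)$ is non-decreasing in both $d$ and $e$, or non-increasing in both $d$ and $e$. Then $\mathrm{OR}_{ED\mid S=1}\le \mathrm{OR}_{ED}$. (b) Suppose that at least one of $I_{OR}\ge 1$, $I_{RR}\ge 1$, $I_{RD}\ge 0$ holds (non-negative interaction on the corresponding scale), and that $p(d,e)$ is non-decreasing in one of $d,e$ and non-increasing in the other. Then $\mathrm{OR}_{ED\mid S=1}\ge \mathrm{OR}_{ED}$.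
   Context: For binary random variables $A,B$ and a random variable $C$, $\mathrm{OR}_{AB\mid C=c}=\frac{P(A=1,B=1\mid C=c)P(A=0,B=0\mid C=c)}{P(A=1,B=0\mid C=c)P(A=0,B=1\mid C=c)}$ and $\mathrm{OR}_{AB}$ is the unconditional version. ''Non-decreasing in $d$'' means $p(1,e)\ge p(0,e)$ for each $e\in\{0,1\}$; ''non-decreasing in $e$'' means $p(d,1)\ge p(d,0)$ for each $d\in\{0,1\}$; non-increasing analogously. *)

(* A joint distribution of three binary random variables
   E, D, S is given by its cell probabilities q e d s = P(E=e, D=d, S=s),
   with false = 0 and true = 1. *)
From mathcomp Require Import all_boot all_order all_algebra.
Set Implicit Arguments. Unset Strict Implicit. Unset Printing Implicit Defensive.
Import Order.TTheory GRing.Theory Num.Theory.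
Local Open Scope ring_scope.

Section Defs.
Variable R : realFieldType.
Variable q : bool -> bool -> bool -> R.

Definition joint_dist : Prop :=
  (forall e d s, 0 < q e d s) /\
  \sum_(e : bool) \sum_(d : bool) \sum_(s : bool) q e d s = 1.

Definition PED (e d : bool) : R := q e d true + q e d false.
Definition PS (s : bool) : R := \sum_(e : bool) \sum_(d : bool) q e d s.
Definition PED_S (s e d : bool) : R := q e d s / PS s.

Definition prob (d e : bool) : R := q e d true / PED e d.
Definition odds (d e : bool) : R := prob d e / (1 - prob d e).

Definition I_OR : R :=
  (odds true true * odds false false) / (odds true false * odds false true).
Definition I_RR : R :=
  (prob true true * prob false false) / (prob true false * prob false true).
Definition I_RD : R :=
  prob true true + prob false false - prob true false - prob false true.

Definition OR_ED : R :=
  (PED true true * PED false false) / (PED true false * PED false true).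
Definition OR_ED_S1 : R :=
  (PED_S true true true * PED_S true false false) /
  (PED_S true true false * PED_S true false true).

Definition nondec_d : Prop := forall e, prob false e <= prob true e.
Definition noninc_d : Prop := forall e, prob true e <= prob false e.
Definition nondec_e : Prop := forall d, prob d false <= prob d true.
Definition noninc_e : Prop := forall d, prob d true <= prob d false.
End Defs.

From mathcomp Require Import all_boot all_order all_algebra.
From mathcomp Require Import ring lra.
Import Order.TTheory GRing.Theory Num.Theory.
Local Open Scope ring_scope.

(* Since P(E=e, D=d, S=1) = p(d,e) P(E=e, D=d) and P(S=1) cancels,
   OR_{ED|S=1} = I_RR * OR_ED, so everything reduces to comparing I_RR with 1.
   Under the monotonicity hypotheses one diagonal pair of risks holds the
   maximum x and the minimum y, and the other pair z, w lies in between.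
   For such numbers x + y <= z + w forces x y <= z w.  If the odds condition
   held while x y > z w, then x + y > z + w, and the same fact applied to the
   complementary risks 1 - p would give (1 - x)(1 - y) <= (1 - z)(1 - w),
   making the odds product of the extremes strictly larger: a contradiction. *)

Section ExtremesAndMiddles.
Variable R : realFieldType.
Implicit Types x y z w : R.

Lemma ler_mul_of_ler_add {x y z w} :
  0 <= y -> y <= z -> y <= w -> x + y <= z + w -> x * y <= z * w.
Proof.
move=> y0 yz yw sum_le.
have : 0 <= (z - y) * (w - y) by apply: mulr_ge0; lra.
have : (x - (z + w - y)) * y <= 0 by apply: mulr_le0_ge0 => //; lra.
lra.
Qed.

Lemma ler_mul_of_ler_odds {x y z w} :
  0 <= y -> x < 1 -> y <= z <= x -> y <= w <= x ->
  x * y * ((1 - z) * (1 - w)) <= z * w * ((1 - x) * (1 - y)) ->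
  x * y <= z * w.
Proof.
move=> y0 x1 /andP[yz zx] /andP[yw wx] odds_le.
rewrite leNgt; apply/negP => prod_lt.
have sum_lt : z + w < x + y.
  rewrite ltNge; apply/negP => /(ler_mul_of_ler_add y0 yz yw).
  by rewrite leNgt prod_lt.
have compl_le : (1 - x) * (1 - y) <= (1 - z) * (1 - w).
  by rewrite mulrC; apply: ler_mul_of_ler_add; lra.
have compl_gt0 : 0 < (1 - x) * (1 - y) by apply: mulr_gt0; lra.
have xy_ge0 : 0 <= x * y by apply: mulr_ge0 => //; lra.
have := ler_wpM2l xy_ge0 compl_le.
move: prod_lt; rewrite -(ltr_pM2r compl_gt0).
lra.
Qed.

Lemma ler_mul_extremes {x y z w} :
  0 <= x < 1 -> 0 <= y < 1 ->
  (y <= z <= x) && (y <= w <= x) || (x <= z <= y) && (x <= w <= y) ->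
  x * y * ((1 - z) * (1 - w)) <= z * w * ((1 - x) * (1 - y)) \/
  x * y <= z * w \/ x + y <= z + w ->
  x * y <= z * w.
Proof.
wlog between : x y / (y <= z <= x) && (y <= w <= x).
  move=> sym hx hy /orP[between|between] interaction.
    by apply: sym => //; rewrite between.
  rewrite mulrC; apply: sym => //; first by rewrite between.
  by rewrite (mulrC y x) (mulrC (1 - y)) (addrC y).
move=> /andP[_ x1] /andP[y0 _] _; case/andP: between => yzx ywx.
case=> [odds_le|[//|sum_le]]; first exact: ler_mul_of_ler_odds odds_le.
case/andP: yzx => yz _; case/andP: ywx => yw _.
exact: ler_mul_of_ler_add sum_le.
Qed.

End ExtremesAndMiddles.

Section TwoByTwoByTwo.
Variables (R : realFieldType) (q : bool -> bool -> bool -> R).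
Hypothesis q_dist : joint_dist q.
Local Notation p := (prob q).

Lemma cell_gt0 e d s : 0 < q e d s.
Proof. by case: q_dist. Qed.

Lemma PED_gt0 e d : 0 < PED q e d.
Proof. by rewrite /PED addr_gt0 ?cell_gt0. Qed.

Lemma prob_gt0 d e : 0 < p d e.
Proof. by rewrite /prob divr_gt0 ?cell_gt0 ?PED_gt0. Qed.

Lemma prob_lt1 d e : p d e < 1.
Proof. by rewrite /prob ltr_pdivrMr ?PED_gt0 // mul1r /PED ltrDl cell_gt0. Qed.

Lemma prob_ge0_lt1 d e : 0 <= p d e < 1.
Proof. by rewrite ltW ?prob_gt0 ?prob_lt1. Qed.

Lemma compl_prob_gt0 d e : 0 < 1 - p d e.
Proof. by rewrite subr_gt0 prob_lt1. Qed.

Lemma OR_ED_gt0 : 0 < OR_ED q.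
Proof. by rewrite /OR_ED divr_gt0 ?mulr_gt0 ?PED_gt0. Qed.

Lemma OR_ED_S1_E : OR_ED_S1 q = I_RR q * OR_ED q.
Proof.
have PS1_neq0 : PS q true != 0.
  by rewrite lt0r_neq0 // /PS !big_bool /= !addr_gt0 ?cell_gt0.
rewrite /OR_ED_S1 /I_RR /OR_ED /PED_S /prob.
by field; rewrite PS1_neq0 !lt0r_neq0 ?cell_gt0 ?PED_gt0.
Qed.

Lemma I_OR_E : I_OR q =
  p true true * p false false * ((1 - p true false) * (1 - p false true)) /
  (p true false * p false true * ((1 - p true true) * (1 - p false false))).
Proof.
have p_neq0 d e : p d e != 0 by rewrite lt0r_neq0 ?prob_gt0.
have p_neq1 d e : 1 - p d e != 0 by rewrite lt0r_neq0 ?subr_gt0 ?prob_lt1.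
by rewrite /I_OR /odds; field; rewrite !p_neq0 !p_neq1.
Qed.

Lemma I_OR_le1 : (I_OR q <= 1) =
  (p true true * p false false * ((1 - p true false) * (1 - p false true)) <=
   p true false * p false true * ((1 - p true true) * (1 - p false false))).
Proof.
by rewrite I_OR_E ler_pdivrMr ?mul1r // !(prob_gt0, compl_prob_gt0, mulr_gt0).
Qed.

Lemma I_OR_ge1 : (1 <= I_OR q) =
  (p true false * p false true * ((1 - p true true) * (1 - p false false)) <=
   p true true * p false false * ((1 - p true false) * (1 - p false true))).
Proof.
by rewrite I_OR_E ler_pdivlMr ?mul1r // !(prob_gt0, compl_prob_gt0, mulr_gt0).
Qed.

Lemma I_RR_le1 :
  (I_RR q <= 1) = (p true true * p false false <= p true false * p false true).
Proof. by rewrite ler_pdivrMr ?mul1r // mulr_gt0 ?prob_gt0. Qed.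

Lemma I_RR_ge1 :
  (1 <= I_RR q) = (p true false * p false true <= p true true * p false false).
Proof. by rewrite ler_pdivlMr ?mul1r // mulr_gt0 ?prob_gt0. Qed.

Lemma I_RD_le0 :
  (I_RD q <= 0) = (p true true + p false false <= p true false + p false true).
Proof. by rewrite /I_RD subr_le0 lerBlDr (addrC (p false true)). Qed.

Lemma I_RD_ge0 :
  (0 <= I_RD q) = (p true false + p false true <= p true true + p false false).
Proof. by rewrite /I_RD subr_ge0 lerBrDr (addrC (p false true)). Qed.

Lemma I_RR_le1_of_nonpos_interaction :
  (I_OR q <= 1 \/ I_RR q <= 1 \/ I_RD q <= 0) ->
  (nondec_d q /\ nondec_e q) \/ (noninc_d q /\ noninc_e q) -> I_RR q <= 1.
Proof.
rewrite I_OR_le1 I_RR_le1 I_RD_le0 => interaction monotone.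
apply: ler_mul_extremes interaction; rewrite ?prob_ge0_lt1 //.
by case: monotone => -[mono_d mono_e]; rewrite !mono_d !mono_e ?orbT.
Qed.

Lemma I_RR_ge1_of_nonneg_interaction :
  (1 <= I_OR q \/ 1 <= I_RR q \/ 0 <= I_RD q) ->
  (nondec_d q /\ noninc_e q) \/ (noninc_d q /\ nondec_e q) -> 1 <= I_RR q.
Proof.
rewrite I_OR_ge1 I_RR_ge1 I_RD_ge0 => interaction monotone.
apply: ler_mul_extremes interaction; rewrite ?prob_ge0_lt1 //.
by case: monotone => -[mono_d mono_e]; rewrite !mono_d !mono_e ?orbT.
Qed.

End TwoByTwoByTwo.

Theorem mainTheorem4 (R : realFieldType) (q : bool -> bool -> bool -> R) :
  joint_dist q ->
  (* (a) *)
  ((I_OR q <= 1 \/ I_RR q <= 1 \/ I_RD q <= 0) ->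
   ((nondec_d q /\ nondec_e q) \/ (noninc_d q /\ noninc_e q)) ->
   OR_ED_S1 q <= OR_ED q) /\
  (* (b) *)
  ((I_OR q >= 1 \/ I_RR q >= 1 \/ I_RD q >= 0) ->
   ((nondec_d q /\ noninc_e q) \/ (noninc_d q /\ nondec_e q)) ->
   OR_ED_S1 q >= OR_ED q).
Proof.
move=> q_dist; rewrite OR_ED_S1_E //; split=> interaction monotone.
- apply: ler_piMl; first exact/ltW/OR_ED_gt0.
  exact: I_RR_le1_of_nonpos_interaction.
- apply: ler_peMl; first exact/ltW/OR_ED_gt0.
  exact: I_RR_ge1_of_nonneg_interaction.
Qed.
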